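(* Let $G$ be a torsion-free group, $\mathbb{F}$ a field, $\mathsf{a}$ a unit in $\mathbb{F}[G]$ with $supp(\mathsf{a})=\{1,x,y,xy\}$ where $x,y$ are distinct non-trivial elements of $G$, and let $\mathsf{b}$ be a mate of $\mathsf{a}$. Then $|supp(\mathsf{a})supp(\mathsf{b})|\le 2|supp(\mathsf{b})|-1$.
   Context: $supp(\gamma)=\{x\in G:\gamma_x\ne0\}$; for subsets $B,C\subseteq G$, $BC=\{bc:b\in B,c\in C\}$. A mate of $\mathsf{a}$ is an element $\mathsf{b}$ with $\mathsf{a}\mathsf{b}=1$ such that $|supp(\mathsf{b})|\le|supp(\mathsf{b}')|$ for every $\mathsf{b}'$ with $\mathsf{a}\mathsf{b}'=1$. *)

From mathcomp Require Import all_boot all_algebra.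
Set Implicit Arguments. Unset Strict Implicit. Unset Printing Implicit Defensive.
Import GRing.Theory.
Local Open Scope ring_scope.

(* Elements of the group algebra F[G] are functions G -> F with finite
   support; the support is listed (without repetition) by a seq. *)
Section GroupAlgebra.
Variables (G : eqType) (mul : G -> G -> G) (one : G) (inv : G -> G).
Variable (F : fieldType).

Definition is_group : Prop :=
  [/\ associative mul, left_id one mul & left_inverse one inv mul].

Definition torsion_free : Prop :=
  forall (g : G) (n : nat), (0 < n)%N -> iter n (mul g) one = one -> g = one.

Definition supported_on (f : G -> F) (s : seq G) : Prop :=
  uniq s /\ forall g, (f g != 0) = (g \in s).

Definition fin_supp (f : G -> F) : Prop := exists s, supported_on f s.

Definition prod_is_one (f g : G -> F) : Prop :=
  exists sf, supported_on f sf /\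
    forall z, \sum_(h <- sf) f h * g (mul (inv h) z) = (if z == one then 1 else 0).

Definition is_unit_GA (f : G -> F) : Prop :=
  fin_supp f /\ exists f', [/\ fin_supp f', prod_is_one f f' & prod_is_one f' f].

Definition is_mate (a b : G -> F) (sb : seq G) : Prop :=
  [/\ supported_on b sb, prod_is_one a b &
      forall b' sb', supported_on b' sb' -> prod_is_one a b' ->
        (size sb <= size sb')%N].

End GroupAlgebra.

(* Let B = supp b and D = B u yB.  Then supp(a) B = D u xD and |D| = 2|B| - |B n yB|,
   so it suffices to show that D contains fewer maximal x-chains {s, xs, ..., x^k s}
   than |B n yB|.  Comparing coefficients of a b = 1 at the two ends of a chain shows
   that a chain endpoint outside B n yB must be the start 1 or the end x^-1, and only
   one of them can occur; a one-element chain {g} inside B n yB forces g = 1 or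
   g = x^-1, since otherwise a(1) a(xy) = a(x) a(y) and a would factor through
   a(1) + a(x) x, which has no finitely supported inverse because x has infinite
   order.  Counting endpoints gives |B n yB| >= 2 (#chains) - 1, which exceeds #chains
   unless D is a single chain; that is impossible, as an endpoint g in B n yB would put
   y g and y^-1 g on the chain and make a positive power of x trivial. *)

From mathcomp Require Import all_boot all_algebra.
From mathcomp Require Import zify ring.
Import GRing.Theory.

Section Counting.
Context {T : eqType}.
Implicit Types (s : seq T) (P : pred T).

Lemma count_mem_sym {s1 s2} :
  uniq s1 -> uniq s2 -> count (mem s2) s1 = count (mem s1) s2.
Proof.
move=> s1U s2U; rewrite -!size_filter; apply/perm_size/uniq_perm; rewrite ?filter_uniq //.
by move=> z; rewrite !mem_filter andbC.
Qed.

Lemma count_eq0 P s : (count P s == 0) = ~~ has P s.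
Proof. by rewrite has_count lt0n negbK. Qed.

Lemma count_le1P {P s} :
  uniq s -> reflect {in s &, forall g h, P g -> P h -> g = h} (count P s <= 1).
Proof.
move=> sU; apply: (iffP idP) => [le1 g h gs hs Pg Ph|Puniq].
  apply: contraTeq le1 => gh; rewrite -ltnNge -size_filter.
  apply: (@uniq_leq_size _ [:: g; h]); first by rewrite /= inE gh.
  by move=> z; rewrite !inE mem_filter => /orP [] /eqP ->; rewrite ?Pg ?Ph.
have [/hasP [g gs Pg]|] := boolP (has P s); last by rewrite has_count -leqNgt => /leq_trans; apply.
rewrite (@eq_in_count _ _ (pred1 g)) ?count_uniq_mem ?leq_b1 // => h hs /=.
by apply/idP/eqP => [Ph|->//]; apply: Puniq.
Qed.
End Counting.

Section GroupLaws.
Variables (G : eqType) (mul : G -> G -> G) (one : G) (inv : G -> G).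
Hypothesis mul_group : is_group mul one inv.

Lemma mulgA : associative mul. Proof. by case: mul_group. Qed.
Lemma mul1g : left_id one mul. Proof. by case: mul_group. Qed.
Lemma mulVg : left_inverse one inv mul. Proof. by case: mul_group. Qed.

Lemma mulgV g : mul g (inv g) = one.
Proof.
by rewrite -[LHS]mul1g -(mulVg (inv g)) -mulgA (mulgA (inv g)) mulVg mul1g.
Qed.

Lemma mulKg g h : mul (inv g) (mul g h) = h.
Proof. by rewrite mulgA mulVg mul1g. Qed.

Lemma mulVKg g h : mul g (mul (inv g) h) = h.
Proof. by rewrite mulgA mulgV mul1g. Qed.

Lemma mulg1 g : mul g one = g.
Proof. by rewrite -(mulVg g) mulVKg. Qed.

Lemma mulgI g : injective (mul g).
Proof. by move=> h k e; rewrite -(mulKg g h) e mulKg. Qed.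

Lemma mulIg g : injective (mul^~ g).
Proof. by move=> h k e; rewrite -(mulg1 h) -(mulgV g) mulgA e -mulgA mulgV mulg1. Qed.

Lemma invgK : involutive inv.
Proof. by move=> g; apply: (@mulgI (inv g)); rewrite mulgV mulVg. Qed.

Lemma invg1 : inv one = one.
Proof. by rewrite -[LHS]mulg1 mulVg. Qed.

Lemma invMg g h : inv (mul g h) = mul (inv h) (inv g).
Proof. by apply: (@mulgI (mul g h)); rewrite mulgV -mulgA mulVKg mulgV. Qed.

Lemma invg_eq1 g : (inv g == one) = (g == one).
Proof. by rewrite -{1}invg1 (inj_eq (can_inj invgK)). Qed.

Lemma iter_mulg n u g : iter n (mul u) g = mul (iter n (mul u) one) g.
Proof. by elim: n => [|n IHn] /=; rewrite ?mul1g // IHn mulgA. Qed.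

Lemma mem_map_mul u s g : (g \in map (mul u) s) = (mul (inv u) g \in s).
Proof. by rewrite -{1}(mulVKg u g) (mem_map (@mulgI u)). Qed.

Lemma map_mul_uniq u s : uniq (map (mul u) s) = uniq s.
Proof. exact/map_inj_uniq/mulgI. Qed.

Definition chain_start u (D : seq G) g := mul (inv u) g \notin D.
Definition chain_end u (D : seq G) g := mul u g \notin D.

Lemma chain_endE u D : chain_end u D =1 chain_start (inv u) D.
Proof. by move=> g; rewrite /chain_start invgK. Qed.

Lemma count_chain_start_end u D :
  uniq D -> count (chain_start u D) D = count (chain_end u D) D.
Proof.
move=> DU; set uD := map (mul u) D.
have uDU : uniq uD by rewrite map_mul_uniq.
have -> : count (chain_start u D) D = count (predC (mem uD)) D.
  by apply: eq_count => g; rewrite /= mem_map_mul.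
have -> : count (chain_end u D) D = count (predC (mem D)) uD by rewrite count_map.
have := count_predC (mem uD) D; have := count_predC (mem D) uD.
by rewrite size_map (count_mem_sym uDU DU); lia.
Qed.

Section TorsionFree.
Hypothesis mul_torsion_free : torsion_free mul one.

Lemma expg_neq1 n {u} : u != one -> iter n.+1 (mul u) one != one.
Proof. by apply: contra => /eqP /(mul_torsion_free _ _ (ltn0Sn n)) ->. Qed.

Lemma iter_mul_fix {n u g} : u != one -> iter n (mul u) g = g -> n = 0%N.
Proof.
move=> u1; rewrite iter_mulg -{2}[g]mul1g => /mulIg.
by case: n => // n /eqP; rewrite (negbTE (expg_neq1 n u1)).
Qed.

Lemma iter_mul_inj u g : u != one -> injective (fun n => iter n (mul u) g).
Proof.
move=> u1 m n /=; wlog le_mn : m n / (m <= n)%N => [wlog_le|].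
  by case/orP: (leq_total m n) => /wlog_le // le_nm /esym /le_nm.
rewrite -(subnK le_mn) iterD => /esym /(iter_mul_fix u1); lia.
Qed.

Lemma orbit_notin {u} g (D : seq G) : u != one -> exists n, iter n (mul u) g \notin D.
Proof.
move=> u1; set orbit := [seq iter n (mul u) g | n <- iota 0 (size D).+1].
have [/allP orbitD|/allPn [_ /mapP [n _ ->] nD]] := boolP (all (mem D) orbit); last by exists n.
have orbitU : uniq orbit by rewrite map_inj_uniq ?iota_uniq //; apply: iter_mul_inj.
by have := uniq_leq_size orbitU orbitD; rewrite size_map size_iota ltnn.
Qed.

Lemma chain_startP {u D g} : u != one -> g \in D ->
  exists k s, [/\ s \in D, chain_start u D s & g = iter k (mul u) s].
Proof.
move=> u1 gD; have Vu1 : inv u != one by rewrite invg_eq1.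
have [[|k]] := ex_minnP (orbit_notin g D Vu1); first by rewrite gD.
move=> kD min_k; exists k, (iter k (mul (inv u)) g); split => //.
  by apply: contraT => /min_k; rewrite ltnn.
elim: k {kD min_k} => // k IHk.
by rewrite iterSr [iter k.+1 (mul (inv u)) g]/= mulVKg.
Qed.

Lemma orbit_ind (P : G -> Prop) (D : seq G) {u} g : u != one ->
  (forall z, z \notin D -> P z) ->
  (forall n, P (iter n.+1 (mul u) g) -> P (iter n (mul u) g)) -> P g.
Proof.
move=> u1 PD step; have [n /PD] := orbit_notin g D u1.
by elim: n => // n IHn /step.
Qed.

(* If all of D is one u-chain starting at p, then v p = u^j p and v^-1 p = u^i p
   force u^(i+j) = 1. *)
Lemma unique_chain_start_translate {u v D p} : u != one -> v != one ->
  {in D, forall s, chain_start u D s -> s = p} ->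
  mul v p \in D -> mul (inv v) p \in D -> False.
Proof.
move=> u1 v1 startD vpD Vvp_D.
have [j [s [sD s_start vpE]]] := chain_startP u1 vpD.
rewrite (startD s sD s_start) in vpE.
have [i [s' [s'D s'_start VvpE]]] := chain_startP u1 Vvp_D.
rewrite (startD s' s'D s'_start) in VvpE.
have vE : v = iter j (mul u) one by apply: (@mulIg p); rewrite -iter_mulg.
have : iter (j + i) (mul u) p = p by rewrite iterD -VvpE iter_mulg -vE mulVKg.
move/(iter_mul_fix u1)/eqP; rewrite addn_eq0 => /andP [/eqP j0 _].
by move: v1; rewrite vE j0 eqxx.
Qed.

Section GroupAlgebra.
Variable F : fieldType.
Local Open Scope ring_scope.

Lemma add_mulf_neq0 (p q u v : F) :
  p != 0 -> q != 0 -> (u != 0) (+) (v != 0) -> p * u + q * v != 0.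
Proof.
move=> p0 q0; have [->|u0] := eqVneq u 0; have [->|v0] := eqVneq v 0 => //= _;
  by rewrite mulr0 ?addr0 ?add0r mulf_neq0.
Qed.

(* Along the powers of x the equation is a two-term recurrence: f vanishes on the
   x^n (n >= 0) and on the x^-n (n >= 1), which contradicts it at z = 1. *)
Lemma two_term_not_invertible {al be : F} (f : G -> F) (D : seq G) {x} :
  x != one -> al != 0 -> be != 0 -> (forall z, z \notin D -> f z = 0) ->
  ~ (forall z, al * f z + be * f (mul (inv x) z) = if z == one then 1 else 0).
Proof.
move=> x1 al0 be0 fD conv_f.
have Vx1 : inv x != one by rewrite invg_eq1.
have f1 : f one = 0.
  apply: (orbit_ind _ D _ x1 fD) => n fx.
  have := conv_f (iter n.+1 (mul x) one).
  rewrite (negbTE (expg_neq1 n x1)) fx mulr0 add0r [iter n.+1 _ _]/= mulKg.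
  by move/eqP; rewrite mulf_eq0 (negbTE be0) => /eqP.
have fVx : f (inv x) = 0.
  apply: (orbit_ind _ D _ Vx1 fD) => n fx.
  have zE : iter n (mul (inv x)) (inv x) = iter n.+1 (mul (inv x)) one.
    by rewrite iterSr /= mulg1.
  have := conv_f (iter n (mul (inv x)) (inv x)).
  rewrite zE (negbTE (expg_neq1 n Vx1)) -zE -iterS fx mulr0 addr0.
  by move/eqP; rewrite mulf_eq0 (negbTE al0) => /eqP.
by have := conv_f one; rewrite eqxx f1 mulg1 fVx !mulr0 addr0 => /eqP; rewrite eq_sym oner_eq0.
Qed.

Variables (a b : G -> F) (sa sb : seq G) (x y : G).
Hypotheses (x1 : x != one) (y1 : y != one) (xy : x != y).
Hypothesis supp_a : forall g, (a g != 0) = (g \in [:: one; x; y; mul x y]).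
Hypothesis a_sa : supported_on a sa.
Hypothesis b_sb : supported_on b sb.

Let conv z := \sum_(h <- sa) a h * b (mul (inv h) z).
Hypothesis conv_one : forall z, conv z = if z == one then 1 else 0.

Let D := sb ++ [seq g <- map (mul y) sb | g \notin sb].
Let covered_twice g := (g \in sb) && (mul (inv y) g \in sb).

Lemma mulxy_neq_x : mul x y != x.
Proof. by apply: contra y1 => /eqP; rewrite -{2}[x]mulg1 => /mulgI ->. Qed.

Lemma mulxy_neq_y : mul x y != y.
Proof. by apply: contra x1 => /eqP; rewrite -{2}[y]mul1g => /mulIg ->. Qed.

Lemma mem_sa g : (g \in sa) = (g \in [:: one; x; y; mul x y]).
Proof. by case: a_sa => _ <-; rewrite supp_a. Qed.

Lemma b_neq0 g : (b g != 0) = (g \in sb). Proof. by case: b_sb. Qed.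

Lemma b_eq0 g : g \notin sb -> b g = 0.
Proof. by rewrite -b_neq0 negbK => /eqP. Qed.

Lemma mem_D g : (g \in D) = (g \in sb) || (mul (inv y) g \in sb).
Proof. by rewrite mem_cat mem_filter mem_map_mul; case: (g \in sb). Qed.

Lemma uniq_D : uniq D.
Proof.
have sbU : uniq sb by case: b_sb.
rewrite cat_uniq sbU filter_uniq ?map_mul_uniq // andbT.
by apply/hasPn => g; rewrite mem_filter => /andP [].
Qed.

Lemma sb_neq_nil : exists g, g \in sb.
Proof.
case E: sb => [|g t]; last by exists g; rewrite inE eqxx.
have := conv_one one; rewrite /conv eqxx big1_seq => [/eqP|h _]; first by rewrite eq_sym oner_eq0.
by rewrite b_eq0 ?mulr0 // E.
Qed.

Lemma conv_restrict z L : uniq L -> {subset L <= sa} ->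
  {in sa, forall h, mul (inv h) z \in sb -> h \in L} ->
  conv z = \sum_(h <- L) a h * b (mul (inv h) z).
Proof.
move=> LU Lsa repsL; rewrite /conv (bigID (mem L)) /= [X in _ + X]big1_seq ?addr0.
  rewrite -big_filter; apply/perm_big/uniq_perm => //; first by rewrite filter_uniq //; case: a_sa.
  by move=> h; rewrite mem_filter andb_idr //; apply: Lsa.
move=> h /andP [hL hsa]; rewrite b_eq0 ?mulr0 //.
by apply: contra hL; apply: repsL.
Qed.

Lemma conv_chain_start {g} : chain_start x D g ->
  conv g = a one * b g + a y * b (mul (inv y) g).
Proof.
rewrite /chain_start mem_D negb_or => /andP [xg_sb xyg_sb].
rewrite (@conv_restrict _ [:: one; y]) ?big_cons ?big_nil ?addr0 ?invg1 ?mul1g //.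
- by rewrite /= inE eq_sym y1.
- by move=> h; rewrite mem_sa !inE => /orP [] /eqP ->; rewrite eqxx ?orbT.
move=> h; rewrite mem_sa !inE => /or4P [] /eqP -> //; rewrite ?eqxx ?orbT //.
  by rewrite (negbTE xg_sb).
by rewrite invMg -mulgA (negbTE xyg_sb).
Qed.

Lemma conv_chain_end {g} : chain_end x D g ->
  conv (mul x g) = a x * b g + a (mul x y) * b (mul (inv y) g).
Proof.
rewrite /chain_end mem_D negb_or => /andP [xg_sb yxg_sb].
rewrite (@conv_restrict _ [:: x; mul x y]) ?big_cons ?big_nil ?addr0 ?invMg -?mulgA ?mulKg //.
- by rewrite /= inE eq_sym mulxy_neq_x.
- by move=> h; rewrite mem_sa !inE => /orP [] /eqP ->; rewrite eqxx ?orbT.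
move=> h; rewrite mem_sa !inE => /or4P [] /eqP -> //; rewrite ?eqxx ?orbT //.
  by rewrite invg1 mul1g (negbTE xg_sb).
by rewrite (negbTE yxg_sb).
Qed.

Lemma conv_full z : mul x y != one -> conv z =
  a one * b z + a x * b (mul (inv x) z) + a y * b (mul (inv y) z)
  + a (mul x y) * b (mul (inv y) (mul (inv x) z)).
Proof.
move=> xy1; rewrite (@conv_restrict _ [:: one; x; y; mul x y]).
- by rewrite !big_cons big_nil invg1 mul1g invMg mulgA !addrA addr0.
- by rewrite /= !inE !negb_or !(eq_sym one) x1 y1 xy1 xy eq_sym mulxy_neq_x eq_sym mulxy_neq_y.
- by move=> h; rewrite mem_sa.
- by move=> h; rewrite mem_sa.
Qed.

Lemma start_covered_once_eq1 {g} : g \in D -> chain_start x D g -> ~~ covered_twice g -> g = one.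
Proof.
move=> gD gS not2; apply/eqP.
have : a one * b g + a y * b (mul (inv y) g) != 0.
  apply: add_mulf_neq0; rewrite ?supp_a ?inE ?eqxx ?orbT //.
  by move: gD not2; rewrite mem_D /covered_twice !b_neq0; do 2!case: (_ \in sb).
by rewrite -conv_chain_start // conv_one; case: (g == one); rewrite ?eqxx.
Qed.

Lemma end_covered_once_eq1 {g} : g \in D -> chain_end x D g -> ~~ covered_twice g -> mul x g = one.
Proof.
move=> gD gE not2; apply/eqP.
have : a x * b g + a (mul x y) * b (mul (inv y) g) != 0.
  apply: add_mulf_neq0; rewrite ?supp_a ?inE ?eqxx ?orbT //.
  by move: gD not2; rewrite mem_D /covered_twice !b_neq0; do 2!case: (_ \in sb).
by rewrite -conv_chain_end // conv_one; case: (mul x g == one); rewrite ?eqxx.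
Qed.

(* If a(1) a(xy) = a(x) a(y) then a = (a(1) + a(x) x)(1 + a(y)/a(1) y), and
   (1 + a(y)/a(1) y) b would be an inverse of the two-term element. *)
Lemma coef_det_neq0 : mul x y != one -> a one * a (mul x y) != a x * a y.
Proof.
move=> xy1; apply/eqP => det0.
have al0 : a one != 0 by rewrite supp_a !inE eqxx.
have be0 : a x != 0 by rewrite supp_a !inE eqxx orbT.
have deE : a (mul x y) = a x * a y / a one by apply: (mulfI al0); rewrite det0; field.
pose f z := b z + a y / a one * b (mul (inv y) z).
apply: (two_term_not_invertible f D x1 al0 be0).
  by move=> z; rewrite mem_D negb_or => /andP [? ?]; rewrite /f !b_eq0 // mulr0 addr0.
by move=> z; rewrite /f -conv_one conv_full // deE; field.
Qed.

Lemma isolated_covered_twice {g} : chain_start x D g -> chain_end x D g -> covered_twice g ->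
  (g == one) || (mul x g == one).
Proof.
move=> gS gE /andP [g_sb yg_sb]; apply: contraT; rewrite negb_or => /andP [g1 xg1].
have [xy1|xy1] := eqVneq (mul x y) one.
  have Vy : inv y = x by rewrite -[inv y]mul1g -xy1 -mulgA mulgV mulg1.
  by move: gE; rewrite /chain_end mem_D -{1}Vy yg_sb.
have := conv_one g; have := conv_one (mul x g).
rewrite (conv_chain_start gS) (conv_chain_end gE) (negbTE g1) (negbTE xg1) => Eup Elow.
have /eqP : (a one * a (mul x y) - a x * a y) * b g = 0.
  have -> : (a one * a (mul x y) - a x * a y) * b g =
    a (mul x y) * (a one * b g + a y * b (mul (inv y) g))
    - a y * (a x * b g + a (mul x y) * b (mul (inv y) g)) by ring.
  by rewrite Eup Elow !mulr0 subrr.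
have bg0 : b g != 0 by rewrite b_neq0.
by rewrite mulf_eq0 (negbTE bg0) orbF subr_eq0 (negbTE (coef_det_neq0 xy1)).
Qed.

Let endpoint := predU (chain_start x D) (chain_end x D).
Let isolated := predI (chain_start x D) (chain_end x D).
Let endpoint_twice := predI endpoint covered_twice.
Let endpoint_once := predI endpoint (predC covered_twice).

Lemma isolated_or_once_cases {g} : g \in D -> isolated g || endpoint_once g ->
  (g == one) && chain_start x D g || (mul x g == one) && chain_end x D g.
Proof.
move=> gD /= /orP [/andP [gS gE] | /andP [/orP [gS|gE] not2]].
- have [twice|not2] := boolP (covered_twice g).
    by case/orP: (isolated_covered_twice gS gE twice) => ->; rewrite ?gS ?gE ?orbT.
  by rewrite gS andbT (start_covered_once_eq1 gD gS not2) eqxx.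
- by rewrite gS andbT (start_covered_once_eq1 gD gS not2) eqxx.
- by rewrite gE andbT (end_covered_once_eq1 gD gE not2) eqxx orbT.
Qed.

Lemma isolated_once_le1 : (count isolated D + count endpoint_once D <= 1)%N.
Proof.
rewrite -count_predUI.
have -> : count (predI isolated endpoint_once) D = 0%N.
  apply/eqP; rewrite count_eq0; apply/hasPn => g gD /=.
  apply/negP => /andP [/andP [gS gE] /andP [_ not2]].
  have := end_covered_once_eq1 gD gE not2; rewrite (start_covered_once_eq1 gD gS not2) mulg1.
  by apply/eqP.
rewrite addn0; apply/(count_le1P uniq_D) => g h gD hD.
move=> /(isolated_or_once_cases gD) gE /(isolated_or_once_cases hD).
case/orP: gE => /andP [/eqP g1 gS]; case/orP => /andP [/eqP h1 hS].
- by rewrite g1 h1.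
- by move: gS; rewrite /chain_start g1 -h1 mulKg hD.
- by move: hS; rewrite /chain_start h1 -g1 mulKg gD.
- by apply: (@mulgI x); rewrite g1 h1.
Qed.

Lemma single_chain_not_twice :
  count (chain_end x D) D = 1%N -> count endpoint_twice D = 0%N.
Proof.
move=> one_chain; apply/eqP; rewrite count_eq0; apply/hasPn => g gD /=.
apply/negP => /andP [gSE /andP [g_sb yg_sb]].
have ygD : mul y g \in D by rewrite mem_D mulKg g_sb orbT.
have VygD : mul (inv y) g \in D by rewrite mem_D yg_sb.
have unique_start u : count (chain_start u D) D = 1%N -> chain_start u D g ->
    {in D, forall s, chain_start u D s -> s = g}.
  move=> /eqP; rewrite eqn_leq => /andP [/(count_le1P uniq_D) start_uniq _] gS s sD sS.
  exact: start_uniq.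
case/orP: gSE => [gS|gE].
  apply: (unique_chain_start_translate x1 y1 _ ygD VygD); apply: unique_start gS.
  by rewrite count_chain_start_end ?uniq_D.
have Vx1 : inv x != one by rewrite invg_eq1.
have gS : chain_start (inv x) D g by rewrite -chain_endE.
apply: (unique_chain_start_translate Vx1 y1 _ ygD VygD); apply: unique_start gS.
by rewrite -(eq_count (chain_endE _ _)).
Qed.

Lemma has_chain : (0 < count (chain_end x D) D)%N.
Proof.
have [g g_sb] := sb_neq_nil.
have gD : g \in D by rewrite mem_D g_sb.
have [_ [s [sD sS _]]] := chain_startP x1 gD.
by rewrite -count_chain_start_end ?uniq_D // -has_count; apply/hasP; exists s.
Qed.

Lemma chains_lt_twice : (count (chain_end x D) D < count covered_twice D)%N.
Proof.
have SE : count (chain_start x D) D = count (chain_end x D) D.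
  exact: count_chain_start_end uniq_D.
have UI : (count endpoint D + count isolated D =
           count (chain_start x D) D + count (chain_end x D) D)%N.
  exact: count_predUI.
have split : (count endpoint D = count endpoint_twice D + count endpoint_once D)%N.
  rewrite -size_filter -(count_predC covered_twice) !count_filter.
  by congr (_ + _)%N; apply: eq_count => g /=; rewrite andbC.
have twice_le : (count endpoint_twice D <= count covered_twice D)%N.
  by apply: sub_count => g /andP [].
have := isolated_once_le1; have := has_chain; have := single_chain_not_twice; lia.
Qed.

Lemma size_D : (size D + count covered_twice D = 2 * size sb)%N.
Proof.
have sbU : uniq sb by case: b_sb.
set yB := map (mul y) sb.
rewrite size_cat size_filter count_cat.
have -> : count covered_twice [seq g <- yB | g \notin sb] = 0%N.
  apply/eqP; rewrite count_eq0; apply/hasPn => g.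
  by rewrite mem_filter => /andP [/negbTE g_sb _]; rewrite /covered_twice g_sb.
have -> : count covered_twice sb = count (mem yB) sb.
  by apply: eq_in_count => g g_sb; rewrite /= /yB mem_map_mul /covered_twice g_sb.
have -> : count (fun g => g \notin sb) yB = count (predC (mem sb)) yB by [].
have := count_predC (mem sb) yB.
rewrite (count_mem_sym sbU) ?map_mul_uniq // size_map; lia.
Qed.

Lemma size_products :
  (size (undup [seq mul g h | g <- [:: one; x; y; mul x y], h <- sb])
     <= size D + count (chain_end x D) D)%N.
Proof.
set D' := D ++ map (mul x) (filter (chain_end x D) D).
have xD w : w \in D -> mul x w \in D'.
  move=> wD; rewrite mem_cat; have [//|xwD] := boolP (mul x w \in D).
  by rewrite map_f // mem_filter /chain_end xwD.
have sub : {subset undup [seq mul g h | g <- [:: one; x; y; mul x y], h <- sb] <= D'}.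
  move=> z; rewrite mem_undup => /allpairsP [[g h] [/= gA h_sb ->]].
  have hD : h \in D by rewrite mem_D h_sb.
  have yhD : mul y h \in D by rewrite mem_D mulKg h_sb orbT.
  move: gA; rewrite !inE => /or4P [] /eqP ->.
  - by rewrite mem_cat mul1g hD.
  - exact: xD.
  - by rewrite mem_cat yhD.
  - by rewrite -mulgA; apply: xD.
apply: leq_trans (uniq_leq_size (undup_uniq _) sub) _.
by rewrite size_cat size_map size_filter.
Qed.

Lemma mate_support_bound :
  (size (undup [seq mul g h | g <- [:: one; x; y; mul x y], h <- sb])
     <= (2 * size sb).-1)%N.
Proof. by have := size_products; have := chains_lt_twice; have := size_D; lia. Qed.

End GroupAlgebra.
End TorsionFree.
End GroupLaws.

Local Open Scope ring_scope.

Theorem mainTheorem16 (G : eqType) (mul : G -> G -> G) (one : G) (inv : G -> G)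
    (F : fieldType) (a b : G -> F) (x y : G) (sb : seq G) :
  is_group mul one inv ->
  torsion_free mul one ->
  x != one -> y != one -> x != y ->
  is_unit_GA mul one inv a ->
  (forall g, (a g != 0) = (g \in [:: one; x; y; mul x y])) ->
  is_mate mul one inv a b sb ->
  (size (undup [seq mul g h | g <- [:: one; x; y; mul x y], h <- sb])
     <= (2 * size sb).-1)%N.
Proof.
move=> mul_group torsion x1 y1 xy _ supp_a [b_sb [sa [a_sa conv_one]] _].
by apply: mate_support_bound; eassumption.
Qed.
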